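(* Let a liquidity provider hold $x$ units of numeraire and $y$ units of a yield token paying a random amount $Y$ (in numeraire) at maturity, and have a concave, increasing utility $U_P$ over terminal wealth, so her terminal wealth is $x+yY$. For $\Delta>0$ let $p(\Delta)$ be the minimum price she is willing to receive per unit to sell $\Delta$ yield tokens, i.e. the price $p$ with $\mathbb{E}[U_P(x+yY+\Delta(p-Y))]=\mathbb{E}[U_P(x+yY)]$. If $\Delta_1<\Delta_2$, then $p(\Delta_1)<p(\Delta_2)$.
   Context: Expectations are with respect to the liquidity provider's belief distribution over $Y$. *)

From HB Require Import structures.
From mathcomp Require Import all_boot all_order all_algebra.
From mathcomp Require Import all_classical all_reals all_analysis.
Set Implicit Arguments. Unset Strict Implicit. Unset Printing Implicit Defensive.
Import Order.TTheory GRing.Theory Num.Theory.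
Local Open Scope classical_set_scope.
Local Open Scope ring_scope.

Definition strictly_concave (R : realType) (U : R -> R) : Prop :=
  forall a b t : R, a != b -> 0 < t < 1 ->
    t * U a + (1 - t) * U b < U (t * a + (1 - t) * b).

Definition strictly_increasing (R : realType) (U : R -> R) : Prop :=
  forall a b : R, a < b -> U a < U b.

Definition indifference_price {d} {T : measurableType d} {R : realType}
  (P : probability T R) (U : R -> R) (x y : R) (Y : T -> R) (Delta p : R) : Prop :=
  P.-integrable setT (EFin \o (fun w => U (x + y * Y w))) /\
  P.-integrable setT (EFin \o (fun w => U (x + y * Y w + Delta * (p - Y w)))) /\
  ('E_P[fun w => U (x + y * Y w + Delta * (p - Y w))%R]
     = 'E_P[fun w => U (x + y * Y w)%R])%E.

From HB Require Import structures.
From mathcomp Require Import all_boot all_order all_algebra.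
From mathcomp Require Import all_classical all_reals all_analysis measurable_realfun.
From mathcomp Require Import ring.
Import Order.TTheory GRing.Theory Num.Theory.
Local Open Scope classical_set_scope.
Local Open Scope ring_scope.

(* Suppose p(Delta2) <= p(Delta1) and let t := Delta1 / Delta2 in (0, 1).
   The wealth W1 after selling Delta1 tokens at p(Delta1) is at least the
   t-mixture of the wealth W2 after selling Delta2 tokens at p(Delta2) and the
   wealth W0 without trade, so U(W1) >= t U(W2) + (1 - t) U(W0) by
   monotonicity and strict concavity, strictly wherever Y <> p(Delta2).  The
   indifference equations give this nonnegative gap zero expectation, hence
   Y = p(Delta2) almost surely, contradicting the nondegeneracy of Y. *)

Lemma strictly_concave_le {R : realType} (U : R -> R) (a b t : R) :
  strictly_concave U -> 0 < t < 1 ->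
  t * U a + (1 - t) * U b <= U (t * a + (1 - t) * b).
Proof.
move=> Uconc t01; have [->|ab] := eqVneq a b; last exact/ltW/Uconc.
have mix_id (c : R) : t * c + (1 - t) * c = c by ring.
by rewrite !mix_id.
Qed.

Lemma sale_wealth_mix {R : fieldType} (w0 v Delta1 Delta2 p : R) :
  Delta2 != 0 ->
  Delta1 / Delta2 * (w0 + Delta2 * (p - v)) + (1 - Delta1 / Delta2) * w0
  = w0 + Delta1 * (p - v).
Proof. by move=> D2; field. Qed.

Section sale_utility_gap.
Context {R : realType} {U : R -> R}.
Hypotheses (Uconc : strictly_concave U) (Uinc : strictly_increasing U).
Context {Delta1 Delta2 p1 p2 : R}.
Hypotheses (D1_gt0 : 0 < Delta1) (D12 : Delta1 < Delta2) (p21 : p2 <= p1).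

Let t := Delta1 / Delta2.
Let D2_neq0 : Delta2 != 0. Proof. by rewrite gt_eqF // (lt_trans D1_gt0). Qed.
Let t01 : 0 < t < 1.
Proof.
have D2_gt0 : 0 < Delta2 by rewrite (lt_trans D1_gt0).
by rewrite divr_gt0 //= ltr_pdivrMr // mul1r.
Qed.

Let sale_price_mono (w0 v : R) :
  U (w0 + Delta1 * (p2 - v)) <= U (w0 + Delta1 * (p1 - v)).
Proof.
apply: (ltW_homo Uinc); rewrite lerD2l ler_wpM2l ?(ltW D1_gt0) //.
by rewrite lerD2r.
Qed.

Lemma sale_utility_gap_ge0 (w0 v : R) :
  t * U (w0 + Delta2 * (p2 - v)) + (1 - t) * U w0 <= U (w0 + Delta1 * (p1 - v)).
Proof.
apply: le_trans (sale_price_mono w0 v).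
rewrite -[in leRHS](sale_wealth_mix w0 v Delta1 Delta2 p2 D2_neq0).
by rewrite strictly_concave_le.
Qed.

Lemma sale_utility_gap_gt0 (w0 v : R) : v != p2 ->
  t * U (w0 + Delta2 * (p2 - v)) + (1 - t) * U w0 < U (w0 + Delta1 * (p1 - v)).
Proof.
move=> vp2; apply: lt_le_trans (sale_price_mono w0 v).
rewrite -[in ltRHS](sale_wealth_mix w0 v Delta1 Delta2 p2 D2_neq0).
apply: Uconc => //.
rewrite -subr_eq0 addrAC subrr add0r mulf_eq0 negb_or D2_neq0 /=.
by rewrite subr_eq0 eq_sym.
Qed.

End sale_utility_gap.

Lemma ge0_integral_eq0_null {d} {T : measurableType d} {R : realType}
    {mu : {measure set T -> \bar R}} (f : T -> R) (A : set T) :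
  measurable A -> measurable_fun setT f -> (forall w, 0 <= f w) ->
  (forall w, A w -> 0 < f w) -> (\int[mu]_w (f w)%:E = 0)%E -> mu A = 0%E.
Proof.
move=> mA mf f_ge0 f_gt0 intf0.
have : ae_eq mu setT (EFin \o f) (cst 0%E).
  have mEf : measurable_fun setT (EFin \o f) by apply/measurable_EFinP.
  apply/(ae_eq_integral_abs mu measurableT mEf).1.
  by under eq_integral => w _ do rewrite gee0_abs ?lee_fin //.
move=> [N [mN muN0 subN]]; apply: subset_measure0 muN0 => // w Aw.
by apply: subN => /(_ I) /= /eqP; rewrite eqe gt_eqF // f_gt0.
Qed.

Lemma expectation_mix_gap_eq0 {d} {T : measurableType d} {R : realType}
    {P : probability T R} (f g h : T -> R) (t : R) :
  f \in Lfun P 1 -> g \in Lfun P 1 -> h \in Lfun P 1 ->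
  ('E_P[f] = 'E_P[h] -> 'E_P[g] = 'E_P[h] ->
   'E_P[(f \- (t \o* g \+ (1 - t) \o* h))%R] = 0)%E.
Proof.
move=> fL gL hL Ef Eg.
have tgL : t \o* g \in Lfun P 1 by exact: Lfun_scale.
have thL : (1 - t) \o* h \in Lfun P 1 by exact: Lfun_scale.
rewrite expectationB ?rpredD // (expectationD tgL thL) !expectationZl // Ef Eg.
rewrite -(fineK (expectation_fin_num hL)) -!EFinM -EFinD.
by congr EFin; ring.
Qed.

Theorem lemma15 (d : measure_display) (T : measurableType d) (R : realType)
  (P : probability T R) (Y : T -> R) (U : R -> R) (x y : R)
  (mY : measurable_fun setT Y)
  (nondegY : forall c : R, (0 < P [set w | Y w != c])%E)
  (Uconc : strictly_concave U) (Uinc : strictly_increasing U)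
  (Delta1 Delta2 p1 p2 : R) :
  0 < Delta1 -> Delta1 < Delta2 ->
  indifference_price P U x y Y Delta1 p1 ->
  indifference_price P U x y Y Delta2 p2 ->
  p1 < p2.
Proof.
move=> D1_gt0 D12 [i0 [i1 e1]] [_ [i2 e2]].
rewrite ltNge; apply/negP => p21.
set f0 := fun w => U (x + y * Y w).
set f1 := fun w => U (x + y * Y w + Delta1 * (p1 - Y w)).
set f2 := fun w => U (x + y * Y w + Delta2 * (p2 - Y w)).
set t := Delta1 / Delta2.
set gap := f1 \- (t \o* f2 \+ (1 - t) \o* f0).
have gapE w : gap w = f1 w - (t * f2 w + (1 - t) * f0 w).
  by rewrite /gap /= (mulrC (f2 w)) (mulrC (f0 w)).
have [L0 L1 L2] : [/\ f0 \in Lfun P 1, f1 \in Lfun P 1 & f2 \in Lfun P 1].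
  by split; apply/Lfun1_integrable.
have Egap : ('E_P[gap] = 0)%E by apply: expectation_mix_gap_eq0.
have mYp2 : measurable [set w | Y w != p2].
  have -> : [set w | Y w != p2] = Y @^-1` [set~ p2].
    by apply/seteqP; split => w /= /eqP.
  by rewrite -[X in measurable X]setTI; apply: mY => //; apply: measurableC.
have : P [set w | Y w != p2] = 0%E.
  apply: (ge0_integral_eq0_null gap _ mYp2) => [|w|w /= Yp2|].
  - have gapL : gap \in Lfun P 1 by rewrite rpredB ?rpredD ?Lfun_scale.
    by have := sub_Lfun_mfun gapL; rewrite inE.
  - rewrite gapE subr_ge0.
    exact: (sale_utility_gap_ge0 Uconc Uinc D1_gt0 D12 p21 _ (Y w)).
  - rewrite gapE subr_gt0.
    exact: (sale_utility_gap_gt0 Uconc Uinc D1_gt0 D12 p21 _ (Y w) Yp2).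
  - by move: Egap; rewrite unlock.
by have := nondegY p2; rewrite lt0e => /andP[/eqP].
Qed.
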